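(* In the setting of the context, let $L=\bigoplus_{i=0}^{r+1}\mathbb ZE_i$, let $L^*=\mathrm{Hom}_{\mathbb Z}(L,\mathbb Z)$ with dual basis $E_0^*,\dots,E_{r+1}^*$, for $i=1,\dots,r$ let $E_i^\vee\in L^*$ be the functional $C\mapsto E_i\cdot C$, and let $\mathbb E\le L^*$ be the subgroup generated by $E_1^\vee,\dots,E_r^\vee$. Then the homomorphism $\nu\colon L^*\to\mathbb Z^2$ defined by $E_i^*\mapsto\nu_i$ $(0\le i\le r+1)$ is surjective with kernel $\mathbb E$.
   Context: $R$ is a two-dimensional normal noetherian excellent Hensel local domain with residue field $\kappa$, having a rational minimal resolution $f\colon Y\to\operatorname{Spec}R$ whose exceptional locus is a chain $E_1,\dots,E_r$ of curves $E_i\simeq\mathbb P^1_\kappa$, with $E_i\cap E_{i+1}$ a single $\kappa$-rational point and no other intersections. $E_0,E_{r+1}\subset Y$ are irreducible non-exceptional curves with $E_0\cdot E_1=1$, $E_0\cdot E_j=0$ for $2\le j\le r$, $E_{r+1}\cdot E_r=1$, $E_{r+1}\cdot E_j=0$ for $1\le j\le r-1$. Put $m_i=-E_i^2$, $\nu_0=(0,1)$, $\nu_1=(1,0)$, $\nu_{i+1}=m_i\nu_i-\nu_{i-1}$ for $i=1,\dots,r$. *)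

From HB Require Import structures.
From mathcomp Require Import all_boot all_order all_algebra.
Set Implicit Arguments. Unset Strict Implicit. Unset Printing Implicit Defensive.
Import Order.TTheory GRing.Theory Num.Theory.
Local Open Scope ring_scope.

(* The curves E_0, ..., E_{r+1} are indexed by 'I_(r.+2); an intersection
   form on L = (+)_{i=0}^{r+1} Z E_i is given by its Gram matrix
   I : 'M[int]_(r.+2), I i j = E_i . E_j.
   L^* = Hom(L, Z) is identified with 'rV[int]_(r.+2) through the dual basis:
   phi corresponds to the row (phi(E_j))_j, i.e. phi = sum_j phi(E_j) E_j^*. *)

Definition mult (r : nat) (I : 'M[int]_(r.+2)) (i : nat) : int :=
  - I (inord i) (inord i).

(* pairs (nu_n, nu_{n+1}) with nu_0 = (0,1), nu_1 = (1,0),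
   nu_{i+1} = m_i nu_i - nu_{i-1} *)
Fixpoint nu_pair (m : nat -> int) (n : nat) : 'rV[int]_2 * 'rV[int]_2 :=
  match n with
  | 0 => (\row_(k < 2) (if k == 0%N :> nat then 0 else 1),
          \row_(k < 2) (if k == 0%N :> nat then 1 else 0))
  | n'.+1 => let p := nu_pair m n' in (p.2, m n'.+1 *: p.2 - p.1)
  end.

Definition nu (m : nat -> int) (n : nat) : 'rV[int]_2 := (nu_pair m n).1.

Definition Edual (r : nat) (I : 'M[int]_(r.+2)) (i : nat) : 'rV[int]_(r.+2) :=
  \row_(j < r.+2) I (inord i) j.

Definition nuhom (r : nat) (I : 'M[int]_(r.+2)) (phi : 'rV[int]_(r.+2)) : 'rV[int]_2 :=
  \sum_(j < r.+2) phi 0 j *: nu (mult I) j.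

(* L^*/E is spanned by E_0^*, E_1^*: since E_i^vee = E_{i-1}^* + E_{i+1}^* - m_i E_i^*, one can
   eliminate the coordinates at E_{r+1}^*, E_r^*, ..., E_2^* in turn by subtracting multiples of
   E_r^vee, ..., E_1^vee.  The same relation is the recursion defining nu, so nu kills E, and nu
   maps a E_0^* + b E_1^* to (b, a), which gives surjectivity and shows that the kernel is E. *)

From mathcomp Require Import all_boot all_algebra zify.
Set Implicit Arguments. Unset Strict Implicit. Unset Printing Implicit Defensive.
Import GRing.Theory.
Local Open Scope ring_scope.

Definition nu_mx (m : nat -> int) (n : nat) : 'M[int]_(n, 2) := \matrix_(j < n) nu m j.

Lemma nu_recr (m : nat -> int) (n : nat) : nu m n.+2 = m n.+1 *: nu m n.+1 - nu m n.
Proof. by []. Qed.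

Lemma nuhomE (r : nat) (I : 'M[int]_(r.+2)) (phi : 'rV[int]_(r.+2)) :
  nuhom I phi = phi *m nu_mx (mult I) r.+2.
Proof. by rewrite mulmx_sum_row; apply: eq_bigr => j _; rewrite rowK. Qed.

Definition vanishes_from (R : nmodType) (n k : nat) (u : 'rV[R]_n) : Prop :=
  forall j : 'I_n, (k <= j)%N -> u 0 j = 0.

Section Chain.

Variables (r : nat) (I : 'M[int]_(r.+2)).
Hypothesis hsym : forall i j : 'I_(r.+2), I i j = I j i.
Hypothesis hchain : forall i j : 'I_(r.+2), (1 <= i <= r)%N -> (1 <= j <= r)%N -> i != j ->
  I i j = (if (i == j.+1 :> nat) || (j == i.+1 :> nat) then 1 else 0).
Hypothesis hE0 : forall j : 'I_(r.+2), (1 <= j <= r)%N ->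
  I (inord 0) j = (if j == 1%N :> nat then 1 else 0).
Hypothesis hEr1 : forall j : 'I_(r.+2), (1 <= j <= r)%N ->
  I (inord r.+1) j = (if j == r :> nat then 1 else 0).

Lemma intersection_offdiag (i : nat) (j : 'I_(r.+2)) : (1 <= i <= r)%N -> j != i :> nat ->
  I (inord i) j = (if (j == i.-1 :> nat) || (j == i.+1 :> nat) then 1 else 0).
Proof.
move=> hi hji; have hi_val : (inord i : 'I_(r.+2)) = i :> nat by rewrite inordK //; lia.
have [j0 | jn0] := eqVneq (j : nat) 0%N.
  have -> : j = inord 0 by apply: val_inj; rewrite /= inordK.
  by rewrite hsym hE0 hi_val // inordK //; do ?[case: eqP => ? /=]; lia.
have [jr | jnr] := eqVneq (j : nat) r.+1.
  have -> : j = inord r.+1 by apply: val_inj; rewrite /= inordK.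
  by rewrite hsym hEr1 hi_val // inordK //; do ?[case: eqP => ? /=]; lia.
have hj : (1 <= j <= r)%N by have := ltn_ord j; lia.
rewrite hchain ?hi_val //; last by rewrite -(inj_eq val_inj) /= hi_val eq_sym.
by do ?[case: eqP => ? /=]; lia.
Qed.

Lemma Edual_chain (i : nat) : (1 <= i <= r)%N ->
  Edual I i = 'e_(inord i.-1) + 'e_(inord i.+1) - mult I i *: 'e_(inord i).
Proof.
move=> hi; apply/rowP => j; rewrite !mxE /= -!(inj_eq val_inj) /= !inordK; try lia.
have [ji | hji] := eqVneq (j : nat) i.
  rewrite ji; have -> : j = inord i by apply: val_inj; rewrite /= inordK //; lia.
  have [-> ->] : (i == i.-1) = false /\ (i == i.+1) = false by split; apply/eqP; lia.
  by rewrite /mult mulr1 opprK add0r.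
rewrite intersection_offdiag // mulr0 subr0.
by do ?[case: eqP => ? /=]; lia.
Qed.

Lemma nuhom_Edual (i : nat) : (1 <= i <= r)%N -> nuhom I (Edual I i) = 0.
Proof.
move=> hi; rewrite Edual_chain // nuhomE mulmxBl mulmxDl -scalemxAl -!rowE !rowK.
rewrite !inordK; try lia.
by case: i hi => [|i] //= _; rewrite nu_recr (addrC (nu _ i)) subrK subrr.
Qed.

Lemma nuhom_Edual_span (c : nat -> int) :
  nuhom I (\sum_(1 <= i < r.+1) c i *: Edual I i) = 0.
Proof.
rewrite nuhomE mulmx_suml big_nat big1 // => i hi.
by rewrite -scalemxAl -nuhomE nuhom_Edual ?scaler0.
Qed.

Lemma Edual_vanishes_from (i : nat) : (1 <= i <= r)%N -> vanishes_from i.+2 (Edual I i).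
Proof.
move=> hi j hj; rewrite mxE intersection_offdiag //; last by apply/eqP; lia.
by do ?[case: eqP => ? /=]; lia.
Qed.

Lemma Edual_next (i : nat) : (1 <= i <= r)%N -> Edual I i 0 (inord i.+1) = 1.
Proof.
move=> hi; have hi1 : (i.+1 < r.+2)%N by lia.
by rewrite mxE intersection_offdiag // inordK // ?eqxx ?orbT //; apply/eqP; lia.
Qed.

(* Back-substitution: E_{k+1}^vee has coordinate 1 at E_{k+2}^* and none above it. *)
Lemma reduce_mod_Edual (k : nat) (phi : 'rV[int]_(r.+2)) : (k <= r)%N ->
  vanishes_from k.+2 phi ->
  exists c : nat -> int, vanishes_from 2 (phi - \sum_(1 <= i < k.+1) c i *: Edual I i).
Proof.
elim: k phi => [|k IH] phi hk hphi.
  by exists (fun=> 0); rewrite big_geq // subr0.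
have hk1 : (1 <= k.+1 <= r)%N by lia.
set a := phi 0 (inord k.+2).
have [c hc] : exists c : nat -> int,
    vanishes_from 2 (phi - a *: Edual I k.+1 - \sum_(1 <= i < k.+1) c i *: Edual I i).
  apply: IH; first lia.
  move=> j hj; rewrite 3!mxE.
  have [jk | jk] := eqVneq (j : nat) k.+2.
    have -> : j = inord k.+2 by apply: val_inj; rewrite /= inordK //; lia.
    by rewrite Edual_next // mulr1 subrr.
  by rewrite hphi ?Edual_vanishes_from ?mulr0 ?subrr //; lia.
exists (fun i => if i == k.+1 then a else c i).
rewrite big_nat_recr //= eqxx addrC opprD addrA.
congr (vanishes_from 2 (_ - _)): hc; apply: eq_big_nat => i hi.
by case: eqP => //; lia.
Qed.

End Chain.

Lemma nuhom_low (r : nat) (I : 'M[int]_(r.+2)) (a b : int) :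
  nuhom I (a *: 'e_0 + b *: 'e_(inord 1)) = \row_k (if k == 0 :> nat then b else a).
Proof.
rewrite nuhomE mulmxDl -!scalemxAl -!rowE !rowK inordK //.
by apply/rowP => k; rewrite !mxE; case: k => [[|[|k]] hk] //=; rewrite mulr0 mulr1 ?addr0 ?add0r.
Qed.

Lemma vanishes_from2E (R : pzSemiRingType) (n : nat) (psi : 'rV[R]_n.+2) : vanishes_from 2 psi ->
  psi = psi 0 0 *: 'e_0 + psi 0 (inord 1) *: 'e_(inord 1).
Proof.
move=> hpsi; apply/rowP => j; rewrite !mxE -!(inj_eq val_inj) /= inordK //.
case: j => [[|[|j]] hj] /=; rewrite ?mulr1 ?mulr0 ?addr0 ?add0r //.
- by congr (psi 0 _); apply: val_inj.
- by congr (psi 0 _); apply: val_inj; rewrite /= inordK.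
- by rewrite hpsi.
Qed.

Lemma nuhom_inj_low (r : nat) (I : 'M[int]_(r.+2)) (psi : 'rV[int]_(r.+2)) :
  vanishes_from 2 psi -> nuhom I psi = 0 -> psi = 0.
Proof.
move=> hpsi; rewrite (vanishes_from2E hpsi) nuhom_low => /rowP hrow.
have := hrow 0; have := hrow 1; rewrite !mxE /= => -> ->.
by rewrite !scale0r addr0.
Qed.

Theorem proposition4p4 (r : nat) (I : 'M[int]_(r.+2))
  (hr : (1 <= r)%N)
  (* intersection pairing is symmetric *)
  (hsym : forall i j : 'I_(r.+2), I i j = I j i)
  (* chain E_1,...,E_r: E_i . E_{i+1} = 1, no other intersections *)
  (hchain : forall i j : 'I_(r.+2), (1 <= i <= r)%N -> (1 <= j <= r)%N -> i != j ->
      I i j = (if (i == j.+1 :> nat) || (j == i.+1 :> nat) then 1 else 0))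
  (* E_0 . E_1 = 1, E_0 . E_j = 0 for 2 <= j <= r *)
  (hE0 : forall j : 'I_(r.+2), (1 <= j <= r)%N ->
      I (inord 0) j = (if j == 1%N :> nat then 1 else 0))
  (* E_{r+1} . E_r = 1, E_{r+1} . E_j = 0 for 1 <= j <= r-1 *)
  (hEr1 : forall j : 'I_(r.+2), (1 <= j <= r)%N ->
      I (inord r.+1) j = (if j == r :> nat then 1 else 0))
  (* the exceptional intersection matrix is negative definite *)
  (hnegdef : forall x : 'rV[int]_(r.+2),
      x 0 (inord 0) = 0 -> x 0 (inord r.+1) = 0 -> x != 0 ->
      (x *m I *m x^T) 0 0 < 0) :
  (forall v : 'rV[int]_2, exists phi : 'rV[int]_(r.+2), nuhom I phi = v) /\
  (forall phi : 'rV[int]_(r.+2),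
      nuhom I phi = 0 <->
      exists c : nat -> int, phi = \sum_(1 <= i < r.+1) c i *: Edual I i).
Proof.
split=> [v | phi].
  exists (v 0 1 *: 'e_0 + v 0 0 *: 'e_(inord 1)); rewrite nuhom_low.
  by apply/rowP => k; rewrite mxE; case: k => [[|[|k]] hk] //=; congr (v 0 _); apply: val_inj.
split=> [hphi | [c ->]]; last exact: nuhom_Edual_span.
have phi_vanishes : vanishes_from r.+2 phi by move=> j; rewrite leqNgt ltn_ord.
have [c hc] := reduce_mod_Edual hsym hchain hE0 hEr1 (leqnn r) phi_vanishes.
exists c; apply/subr0_eq/(nuhom_inj_low (I := I) hc).
by rewrite nuhomE mulmxBl -!nuhomE hphi nuhom_Edual_span // subr0.
Qed.
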